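(* Let $\mathcal{A}=\{1,\dots,L\}$ and let $Q_T$ be a pmf on $\mathcal{A}$ with $Q_T(a)>0$ for all $a$ and $Q_T\neq U_L$. Let $I>\log_2L$ and, for each $n$, let $\mathcal{S}_n=\{a^n\in\mathcal{A}^n: H(\pi(a^n),Q_T)\le I\}$ and $P_{A^n}=U_{\mathcal{S}_n}$ (the uniform pmf on $\mathcal{S}_n$). Then $D(P_{A^n}\|Q_T^n)$ scales linearly with $n$: there exist constants $0<c_1\le c_2<\infty$ such that $c_1n\le D(P_{A^n}\|Q_T^n)\le c_2n$ for all sufficiently large $n$.
   Context: $U_L$ is the uniform pmf on $\mathcal{A}$. $H(P,Q)=-\sum_{a:P(a)>0}P(a)\log_2Q(a)$ is cross entropy; $D(\cdot\|\cdot)$ is informational divergence in bits; $Q_T^n$ is the iid pmf on $\mathcal{A}^n$. The empirical pmf of $a^n$ is $\pi(a^n)=\frac1n[n_1,\dots,n_L]$, with $n_i$ the number of occurrences of letter $i$. *)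

From mathcomp Require Import all_boot all_order all_algebra.
From mathcomp Require Import reals exp.
Set Implicit Arguments. Unset Strict Implicit. Unset Printing Implicit Defensive.
Import Order.TTheory GRing.Theory Num.Theory.
Local Open Scope ring_scope.

Section Defs.
Variable R : realType.

Definition log2 (x : R) : R := ln x / ln 2.

(* empirical pmf of a^n over the alphabet 'I_L = {1,...,L} (0-indexed) *)
Definition emp_pmf (L n : nat) (a : {ffun 'I_n -> 'I_L}) : 'I_L -> R :=
  fun i => #|[set k | a k == i]|%:R / n%:R.

Definition cross_entropy (L : nat) (P Q : 'I_L -> R) : R :=
  - \sum_(i | 0 < P i) P i * log2 (Q i).

Definition divergence (T : finType) (P Q : T -> R) : R :=
  \sum_(x | 0 < P x) P x * log2 (P x / Q x).

Definition unif_pmf (L : nat) : 'I_L -> R := fun _ => L%:R^-1.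

Definition typ_set (L n : nat) (Q : 'I_L -> R) (I : R) : {set {ffun 'I_n -> 'I_L}} :=
  [set a | cross_entropy (emp_pmf a) Q <= I].

Definition unif_on (T : finType) (S : {set T}) : T -> R :=
  fun x => if x \in S then #|S|%:R^-1 else 0.

Definition iid_pmf (L n : nat) (Q : 'I_L -> R) : {ffun 'I_n -> 'I_L} -> R :=
  fun a => \prod_(k < n) Q (a k).

End Defs.

From mathcomp Require Import all_boot all_order all_algebra.
From mathcomp Require Import reals exp sequences.
From mathcomp Require Import ring lra.
Import Order.TTheory GRing.Theory Num.Theory.
Local Open Scope ring_scope.
Set Implicit Arguments. Unset Strict Implicit. Unset Printing Implicit Defensive.

(* Measure in nats and write cost(a) = -ln Q^n(a): then S_n is the sublevel set
   {cost <= n J} with J = I ln 2 > ln L, and D(U_S || Q^n) ln 2 = avg_S cost - ln |S_n|,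
   which is at most n J.
   For the lower bound tilt Q to W = Q^mu / Z with mu in (0,1) and mu J > ln L.
   Gibbs' inequality against W^n gives ln |S_n| <= mu avg_S cost + n ln Z, hence
   D ln 2 >= (1 - mu) avg_S cost - n ln Z.  Gibbs against the uniform law gives
   mu kappa + ln Z <= ln L < mu J for kappa = E_W[-ln Q], so kappa < J.  By Chebyshev
   the W^n-typical sequences (cost close to n kappa) lie in S_n, so
   |S_n| >= exp (n (mu (kappa - eps) + ln Z)) / 2, while at most
   exp (n (mu (kappa - 2 eps) + ln Z)) sequences cost less than n (kappa - 2 eps).
   Hence avg_S cost >= n (kappa - 2 eps) - o(n), and D ln 2 is at least
   n ((1 - mu) kappa - ln Z - 2 eps) - o(n) = n (D(W || Q) - 2 eps) - o(n), which is
   linear since W <> Q when Q is not uniform. *)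

Section Gibbs.
Variable R : realType.

Lemma ln_le_subr1 (x : R) : 0 < x -> ln x <= x - 1.
Proof. by move=> x0; have := expR_ge1Dx (ln x); rewrite lnK ?posrE //; lra. Qed.

Lemma ln_lt_subr1 (x : R) : 0 < x -> x != 1 -> ln x < x - 1.
Proof.
move=> x0 x1; have /expR_gt1Dx : ln x != 0 by rewrite ln_eq0.
by rewrite lnK ?posrE //; lra.
Qed.

Lemma subr_eq_mul_divrB1 (p r : R) : 0 < p -> r - p = p * (r / p - 1).
Proof. by move=> p0; field; rewrite gt_eqF. Qed.

Lemma ln_div_flip (p r : R) : 0 < p -> 0 < r -> ln (p / r) = - ln (r / p).
Proof. by move=> p0 r0; rewrite -lnV ?posrE ?divr_gt0 // invf_div. Qed.

Lemma subr_le_mul_ln_div (p r : R) : 0 < p -> 0 < r -> p - r <= p * ln (p / r).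
Proof.
move=> p0 r0; rewrite ln_div_flip // mulrN lerNr opprB subr_eq_mul_divrB1 //.
by rewrite ler_pM2l // ln_le_subr1 ?divr_gt0.
Qed.

Lemma subr_lt_mul_ln_div (p r : R) :
  0 < p -> 0 < r -> p != r -> p - r < p * ln (p / r).
Proof.
move=> p0 r0 pr; rewrite ln_div_flip // mulrN ltrNr opprB subr_eq_mul_divrB1 //.
rewrite ltr_pM2l // ln_lt_subr1 ?divr_gt0 //.
by apply: contraNneq pr => /divr1_eq ->.
Qed.

Lemma gibbs_inequality (T : finType) (A : {pred T}) (P Q : T -> R) :
  {in A, forall x, 0 < P x} -> {in A, forall x, 0 < Q x} ->
  \sum_(x in A) P x = 1 -> \sum_(x in A) Q x <= 1 ->
  0 <= \sum_(x in A) P x * ln (P x / Q x).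
Proof.
move=> P0 Q0 sP sQ; apply: le_trans (_ : \sum_(x in A) (P x - Q x) <= _).
  by rewrite sumrB sP subr_ge0.
by apply: ler_sum => x Ax; apply: subr_le_mul_ln_div; [apply: P0 | apply: Q0].
Qed.

Lemma gibbs_inequality_strict (T : finType) (P Q : T -> R) :
  (forall x, 0 < P x) -> (forall x, 0 < Q x) ->
  \sum_x P x = 1 -> \sum_x Q x = 1 -> P <> Q ->
  0 < \sum_x P x * ln (P x / Q x).
Proof.
move=> P0 Q0 sP sQ PQ.
have [x0 Px0] : exists x, P x != Q x.
  apply/existsP; apply: contra_notT PQ => /existsPn PQ.
  by apply: boolp.funext => x; apply/eqP; rewrite -[_ == _]negbK PQ.
apply: le_lt_trans (_ : 0 <= \sum_x (P x - Q x)) _; first by rewrite sumrB sP sQ subrr.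
rewrite [ltLHS](bigD1 x0) // [ltRHS](bigD1 x0) //=.
rewrite ltr_leD ?subr_lt_mul_ln_div //.
by apply: ler_sum => x _; apply: subr_le_mul_ln_div.
Qed.

End Gibbs.

Section ProductSums.
Variables (R : comPzRingType) (I T : finType) (W : T -> R).

Lemma sum_ffun_prod :
  \sum_(a : {ffun I -> T}) \prod_k W (a k) = (\sum_t W t) ^+ #|I|.
Proof. by rewrite -(bigA_distr_bigA (fun _ => W)) prodr_const. Qed.

Hypothesis W1 : \sum_t W t = 1.
Variable g : T -> R.
Hypothesis Wg0 : \sum_t W t * g t = 0.

Lemma sum_ffun_prod_cross (j k : I) :
  \sum_(a : {ffun I -> T}) (\prod_m W (a m)) * (g (a j) * g (a k))
  = (j == k)%:R * \sum_t W t * g t ^+ 2.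
Proof.
pose gj (m : I) t := if m == j then g t else 1.
pose gk (m : I) t := if m == k then g t else 1.
have prod_selE (i : I) (a : {ffun I -> T}) :
    \prod_m (if m == i then g (a m) else 1) = g (a i).
  by rewrite -big_mkcond big_pred1_eq.
(* Writing g (a j) * g (a k) as a product over all coordinates lets the sum
   over sequences factor into a product of one-letter sums. *)
transitivity (\sum_(a : {ffun I -> T}) \prod_m (W (a m) * (gj m (a m) * gk m (a m)))).
  by apply: eq_bigr => a _; rewrite !big_split /= !prod_selE.
rewrite -(bigA_distr_bigA (fun m t => W t * (gj m t * gk m t))) (bigD1 j) //=.
rewrite /gj /gk eqxx; case: (eqVneq j k) => [<- | jk].
  rewrite mul1r [X in _ * X]big1 => [|m /negbTE mj]; last first.
    by rewrite -[RHS]W1; apply: eq_bigr => t _; rewrite mj !mulr1.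
  by rewrite mulr1; apply: eq_bigr => t _; rewrite expr2.
rewrite mul0r (_ : \sum_t _ = 0) ?mul0r // -[RHS]Wg0.
by apply: eq_bigr => t _; rewrite mulr1.
Qed.

Lemma sum_ffun_prod_sqr :
  \sum_(a : {ffun I -> T}) (\prod_m W (a m)) * (\sum_k g (a k)) ^+ 2
  = #|I|%:R * \sum_t W t * g t ^+ 2.
Proof.
have sq (a : {ffun I -> T}) : (\prod_m W (a m)) * (\sum_k g (a k)) ^+ 2
    = \sum_j \sum_k (\prod_m W (a m)) * (g (a j) * g (a k)).
  rewrite expr2 mulr_suml mulr_sumr; apply: eq_bigr => j _.
  by rewrite mulr_sumr mulr_sumr.
under eq_bigr do rewrite sq; rewrite exchange_big /=.
under eq_bigr do rewrite exchange_big /=.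
under eq_bigr do under eq_bigr do rewrite sum_ffun_prod_cross.
rewrite mulr_natl -sumr_const; apply: eq_bigr => j _.
rewrite (bigD1 j) //= eqxx mul1r [X in _ + X]big1 ?addr0 // => k.
by rewrite eq_sym => /negbTE ->; rewrite mul0r.
Qed.

End ProductSums.

Section Counting.
Variables (R : realFieldType) (T : finType).

Lemma chebyshev (w X : T -> R) (t : R) : (forall x, 0 <= w x) -> 0 < t ->
  (\sum_(x | t < `|X x|) w x) * t ^+ 2 <= \sum_x w x * X x ^+ 2.
Proof.
move=> w0 t0; rewrite mulr_suml.
apply: le_trans (_ : \sum_(x | t < `|X x|) w x * X x ^+ 2 <= _).
  apply: ler_sum => x tX; rewrite ler_wpM2l // -[X x ^+ 2]real_normK ?num_real //.
  by rewrite lerXn2r ?nnegrE ?(ltW t0) ?(ltW tX).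
rewrite [leRHS](bigID (fun x => t < `|X x|)) /= lerDl.
by apply: sumr_ge0 => x _; rewrite mulr_ge0 ?sqr_ge0.
Qed.

Lemma mul_card_above_le_sum (S : {set T}) (f : T -> R) (t : R) :
  (forall x, 0 <= f x) -> 0 <= t ->
  t * (#|S|%:R - #|[set x | f x <= t]|%:R) <= \sum_(x in S) f x.
Proof.
move=> f0 t0; set B := [set x | f x <= t].
apply: le_trans (_ : t * #|S :\: B|%:R <= _).
  rewrite ler_wpM2l // -(cardsID B S) natrD.
  have : #|S :&: B|%:R <= #|B|%:R :> R by rewrite ler_nat subset_leq_card ?subsetIr.
  lra.
rewrite (big_setID B) /= mulr_natr -sumr_const; apply: ler_wpDl.
- by apply: sumr_ge0 => x _.
- by apply: ler_sum => x; rewrite !inE -ltNge => /andP[/ltW].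
Qed.

End Counting.

Lemma eventually_le_natr_mul (R : archiFieldType) (x c : R) : 0 < c ->
  exists N, forall n, (N <= n)%N -> x <= n%:R * c.
Proof.
move=> c0; exists (Num.bound `|x / c|) => n Nn.
rewrite -ler_pdivrMr //; apply: le_trans (ler_norm _) _.
apply/ltW/(lt_le_trans (archi_boundP (normr_ge0 _))).
by rewrite ler_nat.
Qed.

Lemma expRN_mul_le1 (R : realType) (x : R) : 0 <= x -> x * expR (- x) <= 1.
Proof.
move=> x0; rewrite expRN ler_pdivrMr ?expR_gt0 // mul1r.
by apply: le_trans (expR_ge1Dx x); rewrite lerDr.
Qed.

Lemma exists_lt1_mul_gt (R : realFieldType) (a J : R) : 0 <= a < J ->
  exists2 mu, 0 < mu < 1 & a < mu * J.
Proof.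
case/andP=> a0 aJ; have J0 : 0 < J by apply: le_lt_trans aJ.
exists ((a / J + 1) / 2).
  have : 0 <= a / J by rewrite divr_ge0 // ltW.
  have : a / J < 1 by rewrite ltr_pdivrMr // mul1r.
  lra.
have -> : (a / J + 1) / 2 * J = (a + J) / 2 by field; rewrite gt_eqF.
lra.
Qed.

Lemma sum_comp_card_fibers (R : pzSemiRingType) (I T : finType) (a : I -> T) (f : T -> R) :
  \sum_k f (a k) = \sum_t #|[set k | a k == t]|%:R * f t.
Proof.
rewrite (partition_big a predT) //=; apply: eq_bigr => t _.
rewrite (eq_bigr (fun _ => f t)) => [|k /eqP -> //].
by rewrite sumr_const mulr_natl cardsE.
Qed.

Lemma sum_ord_neq0_gt0 (V : nmodType) n (f : 'I_n -> V) : \sum_i f i != 0 -> (0 < n)%N.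
Proof. by case: n f => // f; rewrite big_ord0 eqxx. Qed.

Lemma ln2_gt0 (R : realType) : 0 < ln (2 : R).
Proof. by rewrite ln_gt0 // ltr1n. Qed.

Section Surprisal.
Variables (R : realType) (L : nat) (Q : 'I_L -> R).
Hypotheses (Q_gt0 : forall i, 0 < Q i) (Q_sum1 : \sum_i Q i = 1).

Definition surprisal i := - ln (Q i).

Definition cost n (a : {ffun 'I_n -> 'I_L}) := \sum_k surprisal (a k).

Definition cost_set n (x : R) := [set a : {ffun 'I_n -> 'I_L} | cost a <= x].

Definition avg_cost n (S : {set {ffun 'I_n -> 'I_L}}) :=
  (\sum_(a in S) cost a) / #|S|%:R.

Lemma L_gt0 : (0 < L)%N.
Proof. by apply: (sum_ord_neq0_gt0 (f := Q)); rewrite Q_sum1 oner_neq0. Qed.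

Lemma Q_le1 i : Q i <= 1.
Proof.
by rewrite -Q_sum1 (bigD1 i) //= lerDl sumr_ge0 // => j _; apply: ltW.
Qed.

Lemma surprisal_ge0 i : 0 <= surprisal i.
Proof. by rewrite oppr_ge0 ln_le0 ?Q_le1. Qed.

Lemma cost_ge0 n (a : {ffun 'I_n -> 'I_L}) : 0 <= cost a.
Proof. by apply: sumr_ge0 => k _; apply: surprisal_ge0. Qed.

Lemma expR_surprisal i : expR (- surprisal i) = Q i.
Proof. by rewrite opprK lnK ?posrE. Qed.

Lemma iid_pmfE n (a : {ffun 'I_n -> 'I_L}) : iid_pmf Q a = expR (- cost a).
Proof.
by rewrite /cost -sumrN expR_sum; apply: eq_bigr => k _; rewrite expR_surprisal.
Qed.

Lemma cross_entropy_emp_pmf n (a : {ffun 'I_n -> 'I_L}) : (0 < n)%N ->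
  cross_entropy (emp_pmf R a) Q = cost a / (n%:R * ln 2).
Proof.
move=> n0; have n0' : n%:R != 0 :> R by rewrite pnatr_eq0 -lt0n.
rewrite /cross_entropy big_mkcond /= /cost sum_comp_card_fibers mulr_suml -sumrN.
apply: eq_bigr => i _; case: (ltrP 0 (emp_pmf R a i)) => [_ | emp_le0]; last first.
  move: emp_le0; rewrite pmulr_lle0 ?invr_gt0 ?ltr0n // lern0 => /eqP ->.
  by rewrite !mul0r oppr0.
by rewrite /emp_pmf /log2 /surprisal; field; rewrite n0' gt_eqF ?ln2_gt0.
Qed.

Lemma typ_setE n (I : R) : (0 < n)%N ->
  typ_set n Q I = cost_set n (n%:R * (I * ln 2)).
Proof.
move=> n0; apply/setP => a; rewrite !inE cross_entropy_emp_pmf //.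
by rewrite ler_pdivrMr ?mulr_gt0 ?ltr0n ?ln2_gt0 // mulrCA.
Qed.

Lemma divergence_unif_iid n (S : {set {ffun 'I_n -> 'I_L}}) : (0 < #|S|)%N ->
  divergence (unif_on R S) (iid_pmf Q) = (avg_cost S - ln #|S|%:R) / ln 2.
Proof.
move=> S0; have S0' : 0 < #|S|%:R :> R by rewrite ltr0n.
rewrite /divergence (eq_bigl [in S]) => [|a]; last first.
  by rewrite /unif_on; case: (a \in S); rewrite ?invr_gt0 ?ltxx.
rewrite (eq_bigr (fun a => #|S|%:R^-1 * ((cost a - ln #|S|%:R) / ln 2))).
  rewrite -mulr_sumr -mulr_suml sumrB sumr_const /avg_cost -mulr_natr.
  by field; rewrite !gt_eqF ?ln2_gt0.
move=> a aS; rewrite /unif_on aS iid_pmfE /log2 ln_div ?posrE ?invr_gt0 ?expR_gt0 //.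
by rewrite lnV ?posrE // expRK opprK addrC.
Qed.

Lemma avg_cost_le n x : (0 < #|cost_set n x|)%N -> avg_cost (cost_set n x) <= x.
Proof.
move=> S0; rewrite ler_pdivrMr ?ltr0n // mulr_natr -sumr_const.
by apply: ler_sum => a; rewrite inE.
Qed.

End Surprisal.

Section Tilt.
Variables (R : realType) (L : nat) (Q : 'I_L -> R).
Hypotheses (Q_gt0 : forall i, 0 < Q i) (Q_sum1 : \sum_i Q i = 1).
Variable mu : R.
Hypothesis mu01 : 0 < mu < 1.

Let mu_ge0 : 0 <= mu. Proof. by case/andP: mu01 => /ltW. Qed.

Local Notation ell := (surprisal Q).
Local Notation cost := (cost Q).
Local Notation ffseq n := {ffun 'I_n -> 'I_L}.

(* [tilt] is Q^mu normalised by the partition function, and [tilt_divergence]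
   is D(tilt || Q) in nats. *)
Definition log_partition := ln (\sum_i expR (- (mu * ell i))).

Definition tilt i := expR (- (mu * ell i) - log_partition).

Definition tilt_mean := \sum_i tilt i * ell i.

Definition tilt_var := \sum_i tilt i * (ell i - tilt_mean) ^+ 2.

Definition tilt_divergence := (1 - mu) * tilt_mean - log_partition.

Lemma partition_ge1 : 1 <= \sum_i expR (- (mu * ell i)).
Proof.
rewrite -Q_sum1; apply: ler_sum => i _; rewrite -expR_surprisal // ler_expR.
by rewrite lerN2 ler_piMl ?surprisal_ge0 //; case/andP: mu01 => _ /ltW.
Qed.

Lemma log_partition_ge0 : 0 <= log_partition.
Proof. exact: ln_ge0 partition_ge1. Qed.

Lemma tilt_gt0 i : 0 < tilt i.
Proof. exact: expR_gt0. Qed.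

Lemma ln_tilt i : ln (tilt i) = - (mu * ell i) - log_partition.
Proof. exact: expRK. Qed.

Lemma tilt_sum1 : \sum_i tilt i = 1.
Proof.
have Z0 := lt_le_trans ltr01 partition_ge1.
under eq_bigr do rewrite /tilt expRB /log_partition lnK ?posrE //.
by rewrite -mulr_suml divff ?gt_eqF.
Qed.

Lemma sum_tilt_affine (f : 'I_L -> R) (c d : R) :
  \sum_i tilt i * (c * f i + d) = c * (\sum_i tilt i * f i) + d.
Proof.
under eq_bigr do rewrite mulrDr mulrCA.
by rewrite big_split /= -mulr_sumr -mulr_suml tilt_sum1 mul1r.
Qed.

Lemma tilt_mean_ge0 : 0 <= tilt_mean.
Proof. by apply: sumr_ge0 => i _; rewrite mulr_ge0 ?surprisal_ge0 // ltW ?tilt_gt0. Qed.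

Lemma tilt_mean_le_ln_card : mu * tilt_mean + log_partition <= ln L%:R.
Proof.
have L0 := L_gt0 Q_sum1.
have invL0 : 0 < L%:R^-1 :> R by rewrite invr_gt0 ltr0n.
have unif_sum_le1 : \sum_(i < L) L%:R^-1 <= 1 :> R.
  by rewrite sumr_const card_ord -(mulr_natr (L%:R^-1)) mulVf ?pnatr_eq0 -?lt0n.
have := gibbs_inequality (A := predT) (in1W tilt_gt0) (in1W (fun=> invL0)) tilt_sum1
  unif_sum_le1.
rewrite (eq_bigr (fun i => tilt i * (- mu * ell i + (ln L%:R - log_partition)))).
  by rewrite sum_tilt_affine -/tilt_mean mulNr; lra.
move=> i _; rewrite ln_div ?posrE ?tilt_gt0 // lnV ?posrE ?ltr0n // ln_tilt.
by congr (_ * _); ring.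
Qed.

Lemma tilt_neq : Q <> @unif_pmf R L -> tilt <> Q.
Proof.
move=> Q_nonunif tiltQ; apply: Q_nonunif.
have mu1 : 1 - mu != 0 by rewrite subr_eq0 gt_eqF //; case/andP: mu01.
have ellE i : ell i = log_partition / (1 - mu).
  have := ln_tilt i; rewrite tiltQ -[ln (Q i)]opprK -/(ell i) => e.
  by apply: (mulIf mu1); rewrite divfK // mulrBr mulr1 [_ * mu]mulrC; lra.
have L0 : L%:R != 0 :> R by rewrite pnatr_eq0 -lt0n (L_gt0 Q_sum1).
apply: boolp.funext => i; rewrite /unif_pmf.
have sumQ : \sum_j Q j = L%:R * Q i.
  rewrite (eq_bigr (fun=> Q i)) ?sumr_const ?card_ord ?mulr_natl // => j _.
  by rewrite -(expR_surprisal Q_gt0 i) -(expR_surprisal Q_gt0 j) !ellE.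
by apply: (mulfI L0); rewrite -sumQ Q_sum1 mulfV.
Qed.

Lemma tilt_divergence_gt0 : Q <> @unif_pmf R L -> 0 < tilt_divergence.
Proof.
move=> /tilt_neq /(gibbs_inequality_strict tilt_gt0 Q_gt0 tilt_sum1 Q_sum1).
rewrite (eq_bigr (fun i => tilt i * ((1 - mu) * ell i - log_partition))) => [|i _].
  by rewrite sum_tilt_affine.
rewrite ln_div ?posrE ?tilt_gt0 // ln_tilt -[ln (Q i)]opprK -/(ell i).
by congr (_ * _); ring.
Qed.

Lemma tilt_divergence_le_mean : tilt_divergence <= tilt_mean.
Proof.
have := log_partition_ge0; have := tilt_mean_ge0; case/andP: mu01 => mu0 _.
rewrite /tilt_divergence; nra.
Qed.

Lemma iid_tiltE n (a : ffseq n) :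
  iid_pmf tilt a = expR (- (mu * cost a) - n%:R * log_partition).
Proof.
rewrite /iid_pmf -expR_sum sumrB sumrN /cost mulr_sumr.
by rewrite sumr_const card_ord mulr_natl.
Qed.

Lemma sum_iid_tilt n : \sum_(a : ffseq n) iid_pmf tilt a = 1.
Proof. by rewrite sum_ffun_prod tilt_sum1 expr1n. Qed.

Lemma iid_tilt_gt0 n (a : ffseq n) : 0 < iid_pmf tilt a.
Proof. by rewrite iid_tiltE expR_gt0. Qed.

Lemma sum_iid_tilt_le1 n (S : {set ffseq n}) : \sum_(a in S) iid_pmf tilt a <= 1.
Proof.
rewrite -(sum_iid_tilt n) [leRHS](bigID [in S]) /= lerDl.
by apply: sumr_ge0 => a _; rewrite ltW ?iid_tilt_gt0.
Qed.

Lemma ln_card_le_avg_cost n (S : {set ffseq n}) : (0 < #|S|)%N ->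
  ln #|S|%:R <= mu * avg_cost Q S + n%:R * log_partition.
Proof.
move=> S0; have S0' : 0 < #|S|%:R :> R by rewrite ltr0n.
have invS0 : 0 < #|S|%:R^-1 :> R by rewrite invr_gt0.
have unifS1 : \sum_(a in S) #|S|%:R^-1 = 1 :> R.
  by rewrite sumr_const -(mulr_natr (#|S|%:R^-1)) mulVf ?gt_eqF.
have := gibbs_inequality (in1W (fun=> invS0)) (in1W (@iid_tilt_gt0 n)) unifS1
  (sum_iid_tilt_le1 S).
rewrite (eq_bigr (fun a =>
  #|S|%:R^-1 * (mu * cost a + (n%:R * log_partition - ln #|S|%:R)))).
  rewrite -mulr_sumr big_split /= -mulr_sumr sumr_const -(mulr_natr (_ - _)).
  rewrite mulrDr [X in _ + X]mulrCA mulVf ?gt_eqF // mulr1.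
  by rewrite mulrCA [_^-1 * _]mulrC -/(avg_cost Q S); lra.
move=> a _; rewrite ln_div ?posrE ?iid_tiltE ?expR_gt0 // lnV ?posrE // expRK.
by congr (_ * _); ring.
Qed.

Lemma card_cost_set_le n x :
  #|cost_set Q n x|%:R * expR (- (mu * x) - n%:R * log_partition) <= 1.
Proof.
apply: le_trans (sum_iid_tilt_le1 (cost_set Q n x)).
rewrite mulr_natl -sumr_const; apply: ler_sum => a; rewrite inE => ax.
by rewrite iid_tiltE ler_expR lerD2r lerN2 ler_wpM2l.
Qed.

Definition typical_set n eps :=
  [set a : ffseq n | `|cost a - n%:R * tilt_mean| <= n%:R * eps].

Lemma typical_tilt_mass n eps : (0 < n)%N -> 0 < eps ->
  2 * tilt_var <= n%:R * eps ^+ 2 ->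
  1 / 2 <= \sum_(a in typical_set n eps) iid_pmf tilt a.
Proof.
move=> n0 eps0 nV; pose dev (a : ffseq n) := cost a - n%:R * tilt_mean.
have devE a : dev a = \sum_k (ell (a k) - tilt_mean).
  by rewrite /dev sumrB sumr_const card_ord mulr_natl.
have centered : \sum_i tilt i * (ell i - tilt_mean) = 0.
  rewrite (eq_bigr (fun i => tilt i * (1 * ell i + - tilt_mean))) => [|i _].
    by rewrite sum_tilt_affine mul1r subrr.
  by rewrite mul1r.
have second_moment : \sum_a iid_pmf tilt a * dev a ^+ 2 = n%:R * tilt_var.
  under eq_bigr do rewrite devE.
  by rewrite (sum_ffun_prod_sqr 'I_n tilt_sum1 centered) card_ord.
have neps0 : 0 < n%:R * eps by rewrite mulr_gt0 ?ltr0n.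
have := chebyshev dev (fun a => ltW (iid_tilt_gt0 a)) neps0.
rewrite second_moment => cheb.
have bad_le : \sum_(a | n%:R * eps < `|dev a|) iid_pmf tilt a <= 1 / 2.
  rewrite -(ler_pM2r (exprn_gt0 2 neps0)); apply: le_trans cheb _.
  have n0' : 0 <= n%:R :> R by rewrite ler0n.
  by rewrite exprMn; nra.
have := sum_iid_tilt n; rewrite (bigID [in typical_set n eps]) /=.
under [X in _ + X]eq_bigl do rewrite inE -ltNge.
by lra.
Qed.

Lemma card_cost_set_ge n eps x : (0 < n)%N -> 0 < eps ->
  2 * tilt_var <= n%:R * eps ^+ 2 -> n%:R * (tilt_mean + eps) <= x ->
  1 / 2 <= #|cost_set Q n x|%:R
           * expR (- (mu * (n%:R * (tilt_mean - eps))) - n%:R * log_partition).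
Proof.
move=> n0 eps0 nV nx; apply: le_trans (typical_tilt_mass n0 eps0 nV) _.
set E := expR _; apply: le_trans (_ : \sum_(a in typical_set n eps) E <= _).
  apply: ler_sum => a; rewrite inE ler_norml => /andP[lo _].
  rewrite iid_tiltE ler_expR lerD2r lerN2 ler_wpM2l //.
  by move: lo; rewrite mulrBr; lra.
rewrite sumr_const [leRHS]mulr_natl ler_pMn2l ?expR_gt0 //.
apply/subset_leq_card/subsetP => a.
by rewrite !inE ler_norml => /andP[_ hi]; move: nx; rewrite mulrDr; lra.
Qed.

End Tilt.

Section Rate.
Variables (R : realType) (L : nat) (Q : 'I_L -> R).
Hypotheses (Q_gt0 : forall i, 0 < Q i) (Q_sum1 : \sum_i Q i = 1).
Hypothesis Q_nonunif : Q <> @unif_pmf R L.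
Variables (mu J : R).
Hypotheses (mu01 : 0 < mu < 1) (lnL_lt_muJ : ln L%:R < mu * J).

Local Notation kappa := (tilt_mean Q mu).
Local Notation psi := (log_partition Q mu).
Local Notation delta := (tilt_divergence Q mu).
Local Notation var := (tilt_var Q mu).
Local Notation S n := (cost_set Q n (n%:R * J)).

Lemma tilt_mean_lt : kappa < J.
Proof.
have [mu0 _] := andP mu01; rewrite -(ltr_pM2l mu0).
have := tilt_mean_le_ln_card Q_gt0 Q_sum1 mu01.
have := log_partition_ge0 Q_gt0 Q_sum1 mu01; have := lnL_lt_muJ; lra.
Qed.

Lemma avg_cost_ge n eps : (0 < n)%N -> 0 < eps -> eps <= J - kappa ->
  2 * eps <= kappa -> 2 * var <= n%:R * eps ^+ 2 ->
  (0 < #|S n|)%N /\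
  n%:R * (kappa - 2 * eps) - 2 * n%:R * kappa * expR (- (n%:R * mu * eps))
    <= avg_cost Q (S n).
Proof.
move=> n0 eps0 eps_gap eps_mean nV.
set t := n%:R * (kappa - 2 * eps); set rho := expR _; set P := n%:R * psi.
have n0' : 0 <= n%:R :> R by rewrite ler0n.
have t0 : 0 <= t by rewrite mulr_ge0 // subr_ge0.
have nJ : n%:R * (kappa + eps) <= n%:R * J by rewrite ler_wpM2l //; lra.
have := card_cost_set_ge Q_gt0 Q_sum1 mu01 n0 eps0 nV nJ.
have -> : expR (- (mu * (n%:R * (kappa - eps))) - P) = rho * expR (- (mu * t) - P).
  by rewrite -expRD /t /rho /P; congr expR; ring.
move=> card_S; have card_low := card_cost_set_le Q_gt0 Q_sum1 mu01 n t.
have S0 : (0 < #|S n|)%N.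
  by rewrite lt0n; apply: contraTneq card_S => ->; rewrite mul0r; lra.
split=> //; have S0' : 0 < #|S n|%:R :> R by rewrite ltr0n.
have low_le : t * #|cost_set Q n t|%:R <= n%:R * kappa * (2 * rho * #|S n|%:R).
  apply: le_trans (_ : t * (2 * rho * #|S n|%:R) <= _); last first.
    by rewrite ler_wpM2r ?mulr_ge0 ?expR_ge0 // ler_wpM2l // gerBl mulr_ge0 //; lra.
  rewrite ler_wpM2l // -(ler_pM2r (expR_gt0 (- (mu * t) - P))).
  by apply: le_trans card_low _; lra.
have := mul_card_above_le_sum (S n) (cost_ge0 Q_gt0 Q_sum1 (n := n)) t0.
by rewrite /avg_cost ler_pdivlMr //; lra.
Qed.

Lemma avg_cost_sub_ln_card_ge n eps : (0 < n)%N -> 0 < eps -> eps <= J - kappa ->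
  2 * eps <= kappa -> 2 * var <= n%:R * eps ^+ 2 ->
  (0 < #|S n|)%N /\
  n%:R * (delta - 2 * eps - 2 * kappa * expR (- (n%:R * mu * eps)))
    <= avg_cost Q (S n) - ln #|S n|%:R.
Proof.
move=> n0 eps0 eps_gap eps_mean nV.
have [S0 avg_ge] := avg_cost_ge n0 eps0 eps_gap eps_mean nV; split=> //.
have lnS := ln_card_le_avg_cost Q_gt0 Q_sum1 mu01 S0.
set rho := expR _ in avg_ge *; have [mu0 mu1] := andP mu01.
have kappa0 := tilt_mean_ge0 Q_gt0 Q_sum1 mu.
have := ler_wpM2l (_ : 0 <= 1 - mu) avg_ge; rewrite subr_ge0 => /(_ (ltW mu1)).
have : 0 <= mu * (n%:R * eps + n%:R * (kappa * rho)).
  by rewrite mulr_ge0 ?addr_ge0 ?mulr_ge0 ?expR_ge0 ?ler0n ?(ltW mu0) ?(ltW eps0).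
by rewrite /tilt_divergence; lra.
Qed.

Lemma divergence_rate : exists2 d, 0 < d & exists N, forall n, (N <= n)%N ->
  (0 < #|S n|)%N /\ n%:R * d <= avg_cost Q (S n) - ln #|S n|%:R.
Proof.
have [mu0 _] := andP mu01.
have delta0 := tilt_divergence_gt0 Q_gt0 Q_sum1 mu01 Q_nonunif.
have delta_mean := tilt_divergence_le_mean Q_gt0 Q_sum1 mu01.
(* eps <= delta / 8 and the two conditions on n keep each of the losses
   2 eps and 2 kappa rho below delta / 4. *)
pose eps := Num.min (delta / 8) (J - kappa).
have eps_delta : eps <= delta / 8 by rewrite ge_min lexx.
have eps_gap : eps <= J - kappa by rewrite ge_min lexx orbT.
have eps0 : 0 < eps by rewrite lt_min divr_gt0 //= subr_gt0 tilt_mean_lt.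
have [N1 N1P] := eventually_le_natr_mul (2 * var) (exprn_gt0 2 eps0).
have [N2 N2P] := eventually_le_natr_mul (8 * kappa) (mulr_gt0 (mulr_gt0 delta0 mu0) eps0).
exists (delta / 2); first by rewrite divr_gt0.
exists (maxn 1 (maxn N1 N2)) => n; rewrite !geq_max => /and3P[n0 /N1P nV /N2P nK].
have [|S0 div_ge] := avg_cost_sub_ln_card_ge n0 eps0 eps_gap _ nV; first by lra.
split=> //; apply: le_trans div_ge; rewrite ler_wpM2l ?ler0n //.
set rho := expR _; have nme0 : 0 < n%:R * mu * eps by rewrite !mulr_gt0 ?ltr0n.
have rho_small : kappa * rho * (n%:R * mu * eps) <= kappa.
  rewrite -mulrA [rho * _]mulrC -[leRHS]mulr1 ler_wpM2l //.
    exact: tilt_mean_ge0.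
  exact: expRN_mul_le1 (ltW nme0).
suff : kappa * rho <= delta / 8 by lra.
by rewrite -(ler_pM2r nme0); move: nK; lra.
Qed.

End Rate.

Unset Implicit Arguments.

Theorem lemma6 (R : realType) (L : nat) (Q : 'I_L -> R) (I : R)
  (hQpos : forall a, 0 < Q a)
  (hQsum : \sum_(a < L) Q a = 1)
  (hQnu : Q <> @unif_pmf R L)
  (hI : log2 L%:R < I) :
  exists c1 c2 : R, [/\ 0 < c1, c1 <= c2 &
    exists N : nat, forall n : nat, (N <= n)%N ->
      c1 * n%:R <= divergence (unif_on R (@typ_set R L n Q I)) (@iid_pmf R L n Q)
      /\ divergence (unif_on R (@typ_set R L n Q I)) (@iid_pmf R L n Q) <= c2 * n%:R].
Proof.
have ln2 := ln2_gt0 R.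
have lnL : 0 <= ln (L%:R : R) < I * ln 2.
  apply/andP; split; last by rewrite -ltr_pdivrMr.
  by apply: ln_ge0; rewrite ler1n (L_gt0 hQsum).
have [mu mu01 muJ] := exists_lt1_mul_gt lnL.
have [d d0 [N dN]] := divergence_rate hQpos hQsum hQnu mu01 muJ.
exists (d / ln 2), (Num.max (d / ln 2) I); split; first by rewrite divr_gt0.
  by rewrite le_max lexx.
exists (maxn 1 N) => n; rewrite geq_max => /andP[n0 /dN[S0 dS]].
rewrite typ_setE // (divergence_unif_iid hQpos) //; split.
  by rewrite ler_pdivlMr // mulrAC divfK ?gt_eqF // mulrC.
have lnS0 : 0 <= ln (#|cost_set Q n (n%:R * (I * ln 2))|%:R : R).
  by apply: ln_ge0; rewrite ler1n.
rewrite ler_pdivrMr //; apply: le_trans (_ : n%:R * (I * ln 2) <= _).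
  by have := avg_cost_le S0; lra.
by rewrite mulrA ler_wpM2r ?(ltW ln2) // mulrC ler_wpM2r ?ler0n // le_max lexx orbT.
Qed.
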